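(* Let $F$ be an infinite field (e.g. $\mathbb{R}$ or $\mathbb{C}$), let $V$ be a vector space over $F$, and let $n\ge 1$. A widget with $n$ pairs in $V$ is valid if and only if it is full and contains a legal subwidget.
   Context: A widget with $n$ pairs in $V$ is an indexed family of $n$ pairs of vectors $p_i=(p_i^+,p_i^-)$, $i=1,\dots,n$, in $V$ (the vectors $p_i^+,p_i^-$ are called the points of the pair $p_i$). A section of a widget is a set of points containing at most one point from each pair. A widget with $n$ pairs is legal if every section spans a linear subspace of $V$ of dimension at most $n-1$. A widget with $n$ pairs is full if the linear span of all its $2n$ points has dimension at least $n$. A widget is valid if it is both legal and full. A subwidget of a widget with $n$ pairs is the widget formed by some $k$ of its pairs with $1\le k<n$; it is itself a widget with $k$ pairs, so it is legal if every one of its sections spans a subspace of dimension at most $k-1$. *)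

From HB Require Import structures.
From mathcomp Require Import all_boot all_order all_algebra.
Set Implicit Arguments. Unset Strict Implicit. Unset Printing Implicit Defensive.
Import GRing.Theory.
Local Open Scope ring_scope.

Definition infinite_type (T : eqType) : Prop :=
  forall s : seq T, exists x : T, x \notin s.

Section Widgets.
Variables (F : fieldType) (V : lmodType F).

Definition lin_indep (s : seq V) : Prop :=
  forall c : 'I_(size s) -> F,
    \sum_(i < size s) c i *: nth 0 s i = 0 -> forall i, c i = 0.

Definition span_dim_le (s : seq V) (d : nat) : Prop :=
  forall t, subseq t s -> lin_indep t -> (size t <= d)%N.

Definition span_dim_ge (s : seq V) (d : nat) : Prop :=
  exists2 t, subseq t s & lin_indep t /\ (d <= size t)%N.

Definition widget (n : nat) := 'I_n -> V * V.

(* A section is described by sel : 'I_n -> option bool: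
   None = no point of pair i, Some true = p_i^+, Some false = p_i^-. *)
Definition section_points (n : nat) (p : widget n) (sel : 'I_n -> option bool)
  : seq V :=
  pmap (fun i => omap (fun b : bool => if b then (p i).1 else (p i).2) (sel i))
       (enum 'I_n).

Definition all_points (n : nat) (p : widget n) : seq V :=
  flatten [seq [:: (p i).1; (p i).2] | i <- enum 'I_n].

Definition legal (n : nat) (p : widget n) : Prop :=
  forall sel : 'I_n -> option bool, span_dim_le (section_points p sel) n.-1.

Definition full (n : nat) (p : widget n) : Prop :=
  span_dim_ge (all_points p) n.

Definition valid (n : nat) (p : widget n) : Prop := legal p /\ full p.

Definition subwidget (n k : nat) (p : widget n) (f : 'I_k -> 'I_n) : widget k :=
  fun j => p (f j).

Definition has_legal_subwidget (n : nat) (p : widget n) : Prop :=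
  exists k : nat, (1 <= k)%N /\ (k < n)%N /\
    exists f : 'I_k -> 'I_n, injective f /\ legal (subwidget p f).

End Widgets.

(* Replacing the points by
   row vectors with the same linear relations, the dimension of the span
   of a set of points becomes a matrix rank, which is monotone, submodular and
   bounded by cardinality.  A legal widget has no transversal of its pairs of
   rank n, so by Rado's theorem some set J of pairs spans fewer than #|J|
   dimensions; fullness forces J to be proper, and the subwidget on J is legal
   because all its sections lie in that span.  Conversely, if the subwidget on
   k pairs is legal, a section has rank at most k - 1 on those pairs and
   contains at most n - k further points. *)

From HB Require Import structures.
From mathcomp Require Import all_boot all_order all_algebra zify.
From Stdlib Require Import Classical.
Set Implicit Arguments. Unset Strict Implicit. Unset Printing Implicit Defensive.
Import GRing.Theory.

Section Rado.
Variables (E I : finType) (r : {set E} -> nat).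
Implicit Types (B : I -> {set E}) (z : E).
Hypothesis r_mono : forall S T : {set E}, S \subset T -> r S <= r T.
Hypothesis r_submod : forall S T : {set E}, r (S :|: T) + r (S :&: T) <= r S + r T.
Hypothesis r_card : forall S : {set E}, r S <= #|S|.

Definition rado_condition (B : I -> {set E}) : bool :=
  [forall J : {set I}, #|J| <= r (\bigcup_(i in J) B i)].

Definition shrink (B : I -> {set E}) (i0 : I) (z : E) (i : I) : {set E} :=
  if i == i0 then B i :\ z else B i.

Lemma shrink_sub B i0 z i : shrink B i0 z i \subset B i.
Proof. by rewrite /shrink; case: eqP => // _; apply: subsetDl. Qed.

Lemma shrink_id B i0 z i : i != i0 -> shrink B i0 z i = B i.
Proof. by rewrite /shrink => /negbTE ->. Qed.

Lemma sum_card_shrink B i0 z : z \in B i0 ->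
  \sum_i #|shrink B i0 z i| < \sum_i #|B i|.
Proof.
move=> zB; rewrite [X in X < _](bigD1 i0) // [X in _ < X](bigD1 i0) //=.
rewrite [in X in X < _](eq_bigr (fun i => #|B i|)) => [|i /shrink_id ->] //.
by rewrite ltn_add2r /shrink eqxx (cardsD1 z (B i0)) zB.
Qed.

Lemma mem_shrink_violator B i0 z (J : {set I}) : rado_condition B ->
  r (\bigcup_(i in J) shrink B i0 z i) < #|J| -> i0 \in J.
Proof.
move=> /forallP /(_ J) hallJ; apply: contraTT => i0J; rewrite -leqNgt.
rewrite (eq_bigr B) // => i iJ; apply: shrink_id.
by apply: contraNneq i0J => <-.
Qed.

(* Otherwise sets J1, J2 violating the condition for the two shrinkings both
   contain i0, and submodularity yields a violation for B on J1 :|: J2 or on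
   (J1 :&: J2) :\ i0. *)
Lemma rado_condition_shrink B i0 x y :
  rado_condition B -> x != y -> x \in B i0 -> y \in B i0 ->
  rado_condition (shrink B i0 x) || rado_condition (shrink B i0 y).
Proof.
move=> hall xy xB yB; apply/negPn/negP => /norP [].
rewrite !negb_forall => /existsP [J1]; rewrite -ltnNge => lt1.
move=> /existsP [J2]; rewrite -ltnNge => lt2.
have i0J1 := mem_shrink_violator hall lt1; have i0J2 := mem_shrink_violator hall lt2.
set U1 := \bigcup_(i in J1) _ in lt1; set U2 := \bigcup_(i in J2) _ in lt2.
have cover_U : \bigcup_(i in J1 :|: J2) B i \subset U1 :|: U2.
  apply/subsetP => a /bigcupP [i /setUP iJ aB].
  have [ii0 | ne] := eqVneq i i0.
    subst i; apply/setUP; have [-> | ax] := eqVneq a x.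
      by right; apply/bigcupP; exists i0; rewrite // /shrink eqxx; apply/setD1P.
    by left; apply/bigcupP; exists i0; rewrite // /shrink eqxx; apply/setD1P.
  by apply/setUP; case: iJ => iJ; [left | right]; apply/bigcupP; exists i;
    rewrite ?shrink_id.
have cover_I : \bigcup_(i in (J1 :&: J2) :\ i0) B i \subset U1 :&: U2.
  apply/subsetP => a /bigcupP [i]; rewrite !inE => /and3P [ne iJ1 iJ2] aB.
  by apply/andP; split; apply/bigcupP; exists i; rewrite ?shrink_id.
have hU := (forallP hall) (J1 :|: J2); have hI := (forallP hall) ((J1 :&: J2) :\ i0).
have := leq_trans (leq_add (r_mono cover_U) (r_mono cover_I)) (r_submod U1 U2).
have := cardsUI J1 J2; have := cardsD1 i0 (J1 :&: J2); rewrite inE i0J1 i0J2 /=.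
by lia.
Qed.

Definition full_rank_transversal B (g : I -> E) : Prop :=
  (forall i, g i \in B i) /\ #|I| <= r [set g i | i in I].

Lemma rado_singletons B : (forall i, #|B i| <= 1) -> rado_condition B ->
  exists g, full_rank_transversal B g.
Proof.
move=> B_le1 hall.
have [g Bg] : exists g : I -> E, forall i, B i = [set g i].
  apply: (@fin_all_exists _ (fun=> E) (fun i e => B i = [set e])) => i.
  apply/cards1P; have := (forallP hall) [set i]; rewrite big_set1 cards1 => le1.
  by rewrite eqn_leq B_le1 (leq_trans le1 (r_card _)).
exists g; split=> [i|]; first by rewrite Bg set11.
have := (forallP hall) setT; rewrite cardsT; move/leq_trans; apply.
apply: r_mono; apply/subsetP => a /bigcupP [i _].
by rewrite Bg inE => /eqP ->; apply: imset_f.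
Qed.

Theorem rado B : rado_condition B -> exists g, full_rank_transversal B g.
Proof.
elim: {B}_.+1 {-2}B (ltnSn (\sum_i #|B i|)) => // m IH B size_B hall.
have [/existsP [i0 big_i0] | small] := boolP [exists i, 1 < #|B i|]; last first.
  apply: rado_singletons => // i; apply: contraR small => big_i.
  by apply/existsP; exists i; rewrite ltnNge.
have [x [y [xB yB xy]]] := card_gt1P big_i0.
have shrinkP z : z \in B i0 -> rado_condition (shrink B i0 z) ->
    exists g, full_rank_transversal B g.
  move=> zB /IH [|g [Bg le]]; first exact: leq_trans (sum_card_shrink zB) size_B.
  by exists g; split=> // i; apply: subsetP (shrink_sub B i0 z i) _ (Bg i).
have /orP [] := rado_condition_shrink hall xy xB yB.
  exact: shrinkP xB.
exact: shrinkP yB.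
Qed.

End Rado.

Section SubspaceRowspace.
Local Open Scope ring_scope.
Variables (F : fieldType) (N : nat) (P : 'rV[F]_N -> Prop).
Hypotheses (P0 : P 0) (P_lin : forall a u v, P u -> P v -> P (a *: u + v)).

Let rows_in_P (K : 'M[F]_N) := forall v, (v <= K)%MS -> P v.

Let rows_in_P_grow K v : rows_in_P K -> P v -> ~~ (v <= K)%MS ->
  rows_in_P (K + v)%MS /\ (\rank K < \rank (K + v)%MS)%N.
Proof.
move=> PK Pv vK; split.
  move=> u /sub_addsmxP [[a b] /= ->]; rewrite addrC.
  have /sub_rVP [c ->] : (b *m v <= v)%MS by apply: submxMl.
  by apply: P_lin => //; apply: PK; apply: submxMl.
apply: rank_ltmx; rewrite ltmxE addsmxSl; apply: contra vK.
exact: submx_trans (addsmxSr K v).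
Qed.

Let rowspace_maximal K : rows_in_P K -> ~ (exists2 v, P v & ~~ (v <= K)%MS) ->
  forall v, (v <= K)%MS <-> P v.
Proof.
move=> PK no_v v; split=> [/PK // | Pv].
by apply/negPn/negP => vK; apply: no_v; exists v.
Qed.

Lemma subspace_rowspace : exists K : 'M[F]_N, forall v, (v <= K)%MS <-> P v.
Proof.
suff: forall d K, rows_in_P K -> (N - \rank K <= d)%N ->
    exists K : 'M[F]_N, forall v, (v <= K)%MS <-> P v.
  by move/(_ N 0); apply=> [v|]; rewrite ?submx0 ?leq_subr // => /eqP ->.
elim=> [|d IH] K PK rank_K.
all: case: (classic (exists2 v, P v & ~~ (v <= K)%MS)) => [[v Pv vK] | no_v];
  last by exists K; apply: rowspace_maximal.
all: have [PKv lt_K] := rows_in_P_grow PK Pv vK; have := rank_leq_col (K + v)%MS.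
- by lia.
- by move=> ?; apply: (IH _ PKv); lia.
Qed.

End SubspaceRowspace.

Section RowModel.
Local Open Scope ring_scope.
Variables (F : fieldType) (V : lmodType F).

Definition row_model (I : finType) N (pt : I -> V) (x : I -> 'rV[F]_N) : Prop :=
  forall c : I -> F, (\sum_a c a *: pt a == 0) = (\sum_a c a *: x a == 0).

Lemma scaler_sum_partition (W : lmodType F) (I J : finType) (g : J -> I)
    (f : I -> W) (c : J -> F) :
  \sum_j c j *: f (g j) = \sum_a (\sum_(j | g j == a) c j) *: f a.
Proof.
rewrite (partition_big g predT) //; apply: eq_bigr => a _; rewrite scaler_suml.
by apply: eq_bigr => j /eqP ->.
Qed.

Lemma row_model_comp (I J : finType) N (pt : I -> V) (x : I -> 'rV[F]_N)
    (g : J -> I) :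
  row_model pt x -> row_model (pt \o g) (x \o g).
Proof.
by move=> ptx c; rewrite (scaler_sum_partition g pt) (scaler_sum_partition g x) ptx.
Qed.

(* The relations among the points form a subspace K of F^I; the rows of
   cokermx K then satisfy exactly the same relations. *)
Lemma exists_row_model (I : finType) (pt : I -> V) :
  exists x : I -> 'rV[F]_#|I|, row_model pt x.
Proof.
pose rel (v : 'rV[F]_#|I|) := \sum_(j < #|I|) v 0 j *: pt (enum_val j) = 0.
have [K K_rel] : exists K : 'M[F]_#|I|, forall v, (v <= K)%MS <-> rel v.
  apply: subspace_rowspace => [|a u v rel_u rel_v]; rewrite /rel.
    by rewrite big1 // => j _; rewrite mxE scale0r.
  under eq_bigr do rewrite !mxE scalerDl -scalerA.
  by rewrite big_split /= -scaler_sumr rel_u rel_v scaler0 addr0.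
exists (fun a => row (enum_rank a) (cokermx K)) => c.
pose cv := \row_(j < #|I|) c (enum_val j).
have -> : \sum_a c a *: pt a = \sum_(j < #|I|) cv 0 j *: pt (enum_val j).
  by rewrite (big_enum_val (A := predT)); apply: eq_bigr => j _; rewrite mxE.
have -> : \sum_a c a *: row (enum_rank a) (cokermx K) = cv *m cokermx K.
  rewrite mulmx_sum_row (big_enum_val (A := predT)).
  by apply: eq_bigr => j _; rewrite mxE enum_valK.
by rewrite -submxE; apply/eqP/idP => /K_rel.
Qed.

End RowModel.

Section RankOf.
Local Open Scope ring_scope.
Variables (F : fieldType) (I : finType) (N : nat) (x : I -> 'rV[F]_N).
Implicit Types (S T : {set I}) (s : seq I).

Definition span_of S : 'M[F]_N := (\sum_(a in S) <<x a>>)%MS.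
Definition rank_of S : nat := \rank (span_of S).
Definition rows_of s : 'M[F]_(size s, N) := \matrix_i x (tnth (in_tuple s) i).

Lemma sub_span_ofP S m (Y : 'M[F]_(m, N)) :
  reflect {in S, forall a, (x a <= Y)%MS} (span_of S <= Y)%MS.
Proof.
apply: (iffP sumsmx_subP) => [sub_Y a /sub_Y | sub_Y a /sub_Y]; by rewrite genmxE.
Qed.

Lemma row_sub_span_of S a : a \in S -> (x a <= span_of S)%MS.
Proof. by move=> aS; apply: (sumsmx_sup a) => //; rewrite genmxE. Qed.

Lemma span_ofS S T : S \subset T -> (span_of S <= span_of T)%MS.
Proof. by move=> /subsetP ST; apply/sub_span_ofP => a /ST; apply: row_sub_span_of. Qed.

Lemma rank_ofS S T : S \subset T -> (rank_of S <= rank_of T)%N.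
Proof. by move=> ST; apply/mxrankS/span_ofS. Qed.

Lemma rank_of_submod S T :
  (rank_of (S :|: T) + rank_of (S :&: T) <= rank_of S + rank_of T)%N.
Proof.
rewrite /rank_of -(mxrank_sum_cap (span_of S)); apply: leq_add; apply: mxrankS.
  apply/sub_span_ofP => a /setUP [aS | aT].
    by apply: submx_trans (addsmxSl _ _); apply: row_sub_span_of.
  by apply: submx_trans (addsmxSr _ _); apply: row_sub_span_of.
by rewrite sub_capmx !span_ofS ?subsetIl ?subsetIr.
Qed.

Lemma rank_of_card S : (rank_of S <= #|S|)%N.
Proof.
rewrite /rank_of /span_of -sum1_card.
elim/big_ind2: _ => [|A k B l le_A le_B|a _]; first by rewrite mxrank0.
  exact: leq_trans (mxrank_adds_leqif A B) (leq_add le_A le_B).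
by rewrite genmxE rank_leq_row.
Qed.

Lemma rank_rows_of s : \rank (rows_of s) = rank_of [set a in s].
Proof.
apply/eqP; rewrite eqn_leq !mxrankS //.
  apply/sub_span_ofP => a; rewrite inE => /seq_tnthP [i ->].
  by rewrite -(rowK (fun i => x (tnth (in_tuple s) i)) i) row_sub.
by apply/row_subP => i; rewrite rowK row_sub_span_of // inE mem_tnth.
Qed.

Lemma exists_free_subseq s : exists2 s', subseq s' s &
  (size s' <= rank_of [set a in s'])%N /\
  (span_of [set a in s] <= span_of [set a in s'])%MS.
Proof.
elim: s => [|a s [s' ss' [free_s' span_s']]].
  by exists [::] => //; split=> //; apply/sub_span_ofP => a; rewrite inE.
have [xa | xa] := boolP (x a <= span_of [set b in s'])%MS.
  exists s'; first exact: subseq_trans ss' (subseq_cons s a).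
  split=> //; apply/sub_span_ofP => b; rewrite inE in_cons => /predU1P [-> // | bs].
  by apply: submx_trans span_s'; apply: row_sub_span_of; rewrite inE.
exists (a :: s'); first by rewrite /= eqxx.
have sub_s' : [set b in s'] \subset [set b in a :: s'].
  by apply/subsetP => b; rewrite !inE => ->; rewrite orbT.
split.
  apply: leq_ltn_trans free_s' _; apply: rank_ltmx.
  rewrite ltmxE span_ofS //=; apply: contra xa => /(submx_trans _); apply.
  by apply: row_sub_span_of; rewrite !inE eqxx.
apply/sub_span_ofP => b; rewrite inE in_cons => /predU1P [-> | bs].
  by apply: row_sub_span_of; rewrite !inE eqxx.
apply: submx_trans (span_ofS sub_s'); apply: submx_trans span_s'.
by apply: row_sub_span_of; rewrite inE.
Qed.

End RankOf.

Lemma subseq_map_preimage (T1 T2 : eqType) (f : T1 -> T2) s (t : seq T2) :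
  subseq t (map f s) -> exists2 s', subseq s' s & t = map f s'.
Proof.
by move/subseqP => [m size_m ->]; exists (mask m s); rewrite ?mask_subseq ?map_mask.
Qed.

Section RowModelRank.
Local Open Scope ring_scope.
Variables (F : fieldType) (V : lmodType F) (I : finType) (N : nat).
Variables (pt : I -> V) (x : I -> 'rV[F]_N).
Hypothesis ptx : row_model pt x.

Lemma lin_indep_rank s :
  lin_indep (map pt s) <-> (size s <= rank_of x [set a in s])%N.
Proof.
rewrite -rank_rows_of row_leq_rank /lin_indep size_map.
have sumE (c : 'I_(size s) -> F) :
    (\sum_i c i *: nth 0 (map pt s) i == 0) = ((\row_i c i) *m rows_of x s == 0).
  have -> : \sum_i c i *: nth 0 (map pt s) i =
            \sum_i c i *: (pt \o tnth (in_tuple s)) i.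
    by apply: eq_bigr => i _; rewrite /= -tnth_map (tnth_nth 0).
  rewrite (row_model_comp (tnth (in_tuple s)) ptx) mulmx_sum_row.
  by congr (_ == 0); apply: eq_bigr => i _; rewrite mxE /rows_of rowK.
split=> [indep | free c /eqP].
  apply/inj_row_free => v /eqP vM0.
  have row_v : \row_i v 0 i = v by apply/rowP => i; rewrite mxE.
  by apply/rowP => i; rewrite mxE; apply: indep => //; apply/eqP; rewrite sumE row_v.
rewrite sumE mulmx_free_eq0 // => /eqP /rowP c0 i.
by have := c0 i; rewrite !mxE.
Qed.

Lemma span_dim_le_rank s d :
  span_dim_le (map pt s) d <-> (rank_of x [set a in s] <= d)%N.
Proof.
split=> [dim_le | rank_le t /subseq_map_preimage [s' ss' ->] /lin_indep_rank].
  have [s' ss' [free_s' span_s']] := exists_free_subseq x s.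
  apply: leq_trans (_ : _ <= rank_of x [set a in s'])%N _; first exact: mxrankS.
  rewrite -rank_rows_of (leq_trans (rank_leq_row _)) // -(size_map pt).
  by rewrite dim_le ?map_subseq ?lin_indep_rank.
rewrite size_map => /leq_trans; apply; apply: leq_trans _ rank_le; apply: rank_ofS.
by apply/subsetP => a; rewrite !inE => /(mem_subseq ss').
Qed.

Lemma span_dim_ge_rank s d :
  span_dim_ge (map pt s) d -> (d <= rank_of x [set a in s])%N.
Proof.
case=> t /subseq_map_preimage [s' ss' ->] [/lin_indep_rank free_s'].
rewrite size_map => /leq_trans; apply; apply: leq_trans free_s' _; apply: rank_ofS.
by apply/subsetP => a; rewrite !inE => /(mem_subseq ss').
Qed.

End RowModelRank.

Section SectionIndex.
Variable n : nat.
Implicit Types (sel : 'I_n -> option bool) (a : 'I_n * bool).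

Definition section_index sel : seq ('I_n * bool) :=
  pmap (fun i => omap (pair i) (sel i)) (enum 'I_n).

Lemma mem_section_index sel a : (a \in section_index sel) = (sel a.1 == Some a.2).
Proof.
rewrite mem_pmap; apply/mapP/eqP => [[i _] | sel_a].
  by case sel_i: (sel i) => //= [b] [->].
by exists a.1; rewrite ?mem_enum // sel_a; case: a {sel_a}.
Qed.

Lemma card_section_index_in sel (R : {set 'I_n}) :
  #|[set a in section_index sel | a.1 \in R]| <= #|R|.
Proof.
set S := [set a in _ | _].
have fst_inj : {in S &, injective (@fst 'I_n bool)}.
  move=> [i b] [j c]; rewrite !inE !mem_section_index /= => /andP [/eqP sel_b _].
  by move=> /andP [/eqP sel_c _] eq_ij; move: sel_c; rewrite -eq_ij sel_b => -[->].
rewrite -(card_in_imset fst_inj) subset_leq_card //.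
by apply/subsetP => i /imsetP [a]; rewrite inE => /andP [_ aR] ->.
Qed.

Definition pair_index (i : 'I_n) : {set 'I_n * bool} := [set (i, true); (i, false)].

Lemma mem_pair_index i a : (a \in pair_index i) = (a.1 == i).
Proof. by case: a => j []; rewrite !inE !xpair_eqE /= ?andbT ?andbF ?orbF. Qed.

End SectionIndex.

Definition relabel k n (f : 'I_k -> 'I_n) (a : 'I_k * bool) : 'I_n * bool :=
  (f a.1, a.2).

Section WidgetPoints.
Variables (F : fieldType) (V : lmodType F) (n : nat) (p : widget V n).

Definition widget_point (a : 'I_n * bool) : V :=
  if a.2 then (p a.1).1 else (p a.1).2.

Lemma section_pointsE sel :
  section_points p sel = map widget_point (section_index sel).
Proof.
rewrite /section_points /section_index; elim: (enum 'I_n) => //= i s ->.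
by case: (sel i).
Qed.

Lemma all_pointsE : all_points p =
  map widget_point (flatten [seq [:: (i, true); (i, false)] | i <- enum 'I_n]).
Proof. by rewrite /all_points; elim: (enum 'I_n) => //= i s ->. Qed.

End WidgetPoints.

Lemma subwidget_section_pointsE (F : fieldType) (V : lmodType F) n
    (p : widget V n) k (f : 'I_k -> 'I_n) sel :
  section_points (subwidget p f) sel =
  map (widget_point p) (map (relabel f) (section_index sel)).
Proof. by rewrite section_pointsE -map_comp. Qed.

Section WidgetRank.
Variables (F : fieldType) (V : lmodType F) (n : nat) (p : widget V n).
Variables (N : nat) (x : 'I_n * bool -> 'rV[F]_N).
Hypothesis px : row_model (widget_point p) x.
Local Notation r := (rank_of x).

Lemma legal_rank : legal p <-> forall sel, r [set a in section_index sel] <= n.-1.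
Proof.
split=> legal_p sel; have := legal_p sel;
  by rewrite section_pointsE => /(span_dim_le_rank px).
Qed.

Lemma legal_subwidget_rank k (f : 'I_k -> 'I_n) : legal (subwidget p f) <->
  forall sel, r [set a in map (relabel f) (section_index sel)] <= k.-1.
Proof.
split=> legal_pf sel; have := legal_pf sel;
  by rewrite subwidget_section_pointsE => /(span_dim_le_rank px).
Qed.

Lemma full_rank : full p -> n <= r setT.
Proof.
rewrite /full all_pointsE => /(span_dim_ge_rank px) /leq_trans; apply.
exact/rank_ofS/subsetT.
Qed.

Lemma transversal_rank_lt g : 0 < n -> legal p ->
  (forall i, g i \in pair_index i) -> r [set g i | i in 'I_n] < n.
Proof.
move=> n_gt0 /legal_rank /(_ (fun i => Some (g i).2)) rank_le g_pair.
rewrite -ltnS prednK // in rank_le; apply: leq_ltn_trans rank_le; apply: rank_ofS.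
apply/subsetP => _ /imsetP [i _ ->]; rewrite inE mem_section_index.
by move: (g_pair i); rewrite mem_pair_index => /eqP ->.
Qed.

Lemma exists_deficient_pairs : 0 < n -> legal p ->
  exists J : {set 'I_n}, r (\bigcup_(i in J) pair_index i) < #|J|.
Proof.
move=> n_gt0 legal_p.
have : ~~ rado_condition r (@pair_index n).
  apply/negP => /(rado (rank_ofS x) (rank_of_submod x) (rank_of_card x)) [g [g_pair]].
  by rewrite card_ord leqNgt transversal_rank_lt.
by rewrite negb_forall => /existsP [J]; rewrite -ltnNge; exists J.
Qed.

Lemma legal_deficient_subwidget (J : {set 'I_n}) :
  r (\bigcup_(i in J) pair_index i) < #|J| ->
  legal (subwidget p (@enum_val _ (pred_of_set J))).
Proof.
move=> deficient; apply/legal_subwidget_rank => sel.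
rewrite -ltnS (ltn_predK deficient); apply: leq_ltn_trans deficient; apply: rank_ofS.
apply/subsetP => a; rewrite inE => /mapP [[j b] _ ->]; apply/bigcupP.
by exists (enum_val j); rewrite ?enum_valP // mem_pair_index.
Qed.

Lemma deficient_pairs_proper (J : {set 'I_n}) : full p ->
  r (\bigcup_(i in J) pair_index i) < #|J| -> #|J| < n.
Proof.
move=> full_p deficient.
have := max_card J; rewrite card_ord leq_eqVlt => /orP [/eqP card_J | //].
have J_T : J = setT by apply/eqP; rewrite eqEcard subsetT cardsT card_ord card_J leqnn.
move: deficient; rewrite J_T cardsT card_ord ltnNge (leq_trans (full_rank full_p)) //.
apply/rank_ofS/subsetP => -[i b] _; apply/bigcupP.
by exists i; rewrite ?mem_pair_index.
Qed.

Lemma has_legal_subwidget_of_valid : 0 < n -> valid p -> has_legal_subwidget p.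
Proof.
move=> n_gt0 [legal_p full_p].
have [J deficient] := exists_deficient_pairs n_gt0 legal_p.
exists #|J|; split; first exact: leq_ltn_trans deficient.
split; first exact: deficient_pairs_proper deficient.
exists (@enum_val _ (pred_of_set J)); split; first exact: enum_val_inj.
exact: legal_deficient_subwidget.
Qed.

Lemma legal_of_legal_subwidget : has_legal_subwidget p -> legal p.
Proof.
move=> [k [k_gt0 [k_lt_n [f [f_inj /legal_subwidget_rank legal_pf]]]]].
apply/legal_rank => sel; set S := [set a in _].
pose R := [set f j | j in 'I_k].
pose S_in := [set a in S | a.1 \in R]; pose S_out := [set a in S | a.1 \notin R].
have -> : S = S_in :|: S_out by apply/setP => a; rewrite !inE -andb_orr orbN andbT.
have rank_in : r S_in <= k.-1.
  apply: leq_trans (legal_pf (sel \o f)); apply/rank_ofS/subsetP => -[i b].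
  rewrite !inE mem_section_index /= => /andP [sel_i /imsetP [j _ eq_i]].
  apply/mapP; exists (j, b); last by rewrite /relabel eq_i.
  by rewrite mem_section_index /= -eq_i.
have card_out : #|S_out| <= n - k.
  have -> : S_out = [set a in section_index sel | a.1 \in ~: R].
    by apply/setP => a; rewrite !inE.
  have card_R : #|~: R| = n - k.
    have := cardsC R; rewrite card_imset // !card_ord; lia.
  by apply: leq_trans (card_section_index_in sel (~: R)) _; rewrite card_R.
have := rank_of_submod x S_in S_out; have := rank_of_card x S_out.
by lia.
Qed.

End WidgetRank.

Theorem corollary1p1 (F : fieldType) (HF : infinite_type F)
  (V : lmodType F) (n : nat) (Hn : (1 <= n)%N) (p : widget V n) :
  valid p <-> full p /\ has_legal_subwidget p.
Proof.
have [x px] := exists_row_model (widget_point p).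
split=> [valid_p | [full_p legal_sub]].
  by split; [case: valid_p | exact: has_legal_subwidget_of_valid px Hn valid_p].
by split=> //; exact: legal_of_legal_subwidget px legal_sub.
Qed.
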